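(* For each point $p$ of $\mathcal{W}(3,2)$, consider the type-$p$ $X$-states, i.e. the two-qubit density matrices $\rho=\tfrac14\big(I\otimes I+\sum_{q\in H_p}c_q\,q\big)$ with real coefficients $c_q$. The $9$ types $p$ of Group 2 (those for which some valid type-$p$ state is entangled) are exactly the $9$ points $p$ whose perp-set $H_p$ intersects $\mathcal{Q}_0$ tangentially. The $6$ types of Group 1 (those for which every valid type-$p$ state is separable) are exactly the $6$ points $p$ whose perp-set $H_p$ intersects $\mathcal{Q}_0$ transversally.
   Context: The symplectic polar space $\mathcal{W}(3,2)$ is realized as follows. Its $15$ points are the $15$ nontrivial two-qubit Pauli operators $A\otimes B$ with $A,B\in\{I,X,Y,Z\}$, not both $I$, taken up to phase. Its $15$ lines are the triples $\{P,Q,PQ\}$ (up to phase) of pairwise commuting such operators. For a point $p$, its perp-set is $H_p=\{q: q \text{ commutes with } p\}$. It contains $p$ and has $7$ points: the union of the three lines through $p$. $\mathcal{Q}_0$ is the set of the $9$ points $A\otimes B$ with $A,B\in\{X,Y,Z\}$. Together with the $6$ lines of $\mathcal{W}(3,2)$ contained in it, $\mathcal{Q}_0$ forms a $3\times3$ grid; it is the hyperbolic quadric $x_1x_2+x_3x_4+x_1+x_2+x_3+x_4=0$ in the coordinates where $(Z^{\mu_1}X^{\nu_1})\otimes(Z^{\mu_2}X^{\nu_2})\mapsto[\mu_1:\nu_1:\mu_2:\nu_2]$. A geometric hyperplane of a point-line geometry is a set of points such that every line either lies in it or meets it in exactly one point. The geometric hyperplanes of the grid $\mathcal{Q}_0$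 are of two kinds: - perp-sets of the grid: a point together with the two grid lines through it ($5$ points); - ovoids: $3$ points, no two on a common grid line. $H_p$ intersects $\mathcal{Q}_0$ tangentially if $H_p\cap\mathcal{Q}_0$ is a perp-set of the grid, and transversally if $H_p\cap\mathcal{Q}_0$ is an ovoid of the grid. A density matrix is valid if positive semidefinite, and separable/entangled according to whether its partial transpose is positive semidefinite or not. *)

From HB Require Import structures.
From mathcomp Require Import all_boot all_order all_algebra.
From mathcomp Require Import complex mxtens.
From mathcomp Require Import reals.
Set Implicit Arguments. Unset Strict Implicit. Unset Printing Implicit Defensive.
Import Order.TTheory GRing.Theory Num.Theory.
Local Open Scope ring_scope.
Local Open Scope complex_scope.

Section W32.
Variable R : realType.
Local Notation C := R[i].

Definition pauliX : 'M[C]_2 := \matrix_(i < 2, j < 2) (if i == j then 0 else 1).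
Definition pauliY : 'M[C]_2 :=
  \matrix_(i < 2, j < 2) (if i == j then 0 else if i == 0 then - 'i else 'i).
Definition pauliZ : 'M[C]_2 :=
  \matrix_(i < 2, j < 2) (if i == j then (if i == 0 then 1 else -1) else 0).

Definition pauli (k : 'I_4) : 'M[C]_2 :=
  match val k with
  | 0 => 1%:M
  | 1 => pauliX
  | 2 => pauliY
  | _ => pauliZ
  end.

(* two-qubit Pauli labels A (x) B; the points of W(3,2) are the labels other than (I,I) *)
Definition pt := ('I_4 * 'I_4)%type.
Definition is_point (p : pt) : bool := p != (0, 0).

Definition opm (p : pt) : 'M[C]_(2 * 2) := pauli p.1 *t pauli p.2.

Definition commutes (p q : pt) : bool := opm p *m opm q == opm q *m opm p.

Definition perp (p : pt) : {set pt} := [set q | is_point q && commutes p q].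

Definition is_line (L : {set pt}) : Prop :=
  exists a b c : pt,
    [/\ L = [set a; b; c], [&& is_point a, is_point b & is_point c],
        [&& a != b, b != c & a != c],
        [&& commutes a b, commutes b c & commutes a c] &
        exists lam : C, opm a *m opm b = lam *: opm c].

Definition Q0 : {set pt} := [set q : pt | (q.1 != 0) && (q.2 != 0)].

Definition grid_line (L : {set pt}) : Prop := is_line L /\ L \subset Q0.

Definition grid_perp_set (S : {set pt}) : Prop :=
  exists x, x \in Q0 /\
    forall y, y \in S <-> (y = x \/ exists L, [/\ grid_line L, x \in L & y \in L]).

Definition grid_ovoid (S : {set pt}) : Prop :=
  [/\ S \subset Q0, #|S| = 3 &
      forall x y, x \in S -> y \in S -> x != y ->
        ~ exists L, [/\ grid_line L, x \in L & y \in L]].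

Definition tangential_at (p : pt) : Prop := grid_perp_set (perp p :&: Q0).
Definition transversal_at (p : pt) : Prop := grid_ovoid (perp p :&: Q0).

Definition xstate (p : pt) (c : pt -> R) : 'M[C]_(2 * 2) :=
  4^-1 *: (1%:M + \sum_(q in perp p) (c q)%:C *: opm q).

Definition psd (M : 'M[C]_(2 * 2)) : Prop :=
  forall v : 'cV[C]_(2 * 2), 0 <= ((map_mx Num.conj v)^T *m M *m v) 0 0.

(* partial transpose on the second qubit *)
Definition ptrans (M : 'M[C]_(2 * 2)) : 'M[C]_(2 * 2) :=
  \matrix_(i, j) M (mxtens_index ((mxtens_unindex i).1, (mxtens_unindex j).2))
                   (mxtens_index ((mxtens_unindex j).1, (mxtens_unindex i).2)).

Definition valid (M : 'M[C]_(2 * 2)) : Prop := psd M.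
Definition separable (M : 'M[C]_(2 * 2)) : Prop := psd (ptrans M).
Definition entangled (M : 'M[C]_(2 * 2)) : Prop := ~ psd (ptrans M).

Definition group2 (p : pt) : Prop :=
  exists c : pt -> R, valid (xstate p c) /\ entangled (xstate p c).
Definition group1 (p : pt) : Prop :=
  forall c : pt -> R, valid (xstate p c) -> separable (xstate p c).

End W32.

(* The partial transpose, the full transpose and the conjugation by a Pauli
   operator u all act on two-qubit Pauli operators by signs: they negate the
   operators whose second factor is Y, those with an odd number of Y factors,
   and those anticommuting with u, respectively.

   If p = A (x) I or I (x) B lies off Q0, then on H_p the signs of the partial
   transpose coincide with those of a conjugation by a Pauli operator,
   possibly composed with the full transpose (a finite check).  Both maps
   preserve positivity, so every valid type-p state is separable.

   If p lies on Q0, pick b in Q0 commuting with p whose second factor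
   anticommutes with that of p.  With P, B the operators of p, b, the matrix
   X = (1 + P)(1 + B) satisfies X^* X = 4 X, so the type-p state
   1/4 X = 1/16 X^* X is valid.  Its partial transpose is
   1/4 (1 + P' + B' - P'B') with P', B' commuting traceless involutions,
   which has the eigenvalue -1/2 on the nonzero matrix (1 - P')(1 - B').

   On the geometric side, H_p meets Q0 in p and its four grid neighbours when
   p is on Q0, and in three pairwise anticommuting points otherwise; the
   cardinalities 5 and 3 tell the two kinds of hyperplanes apart. *)

From HB Require Import structures.
From mathcomp Require Import all_boot all_order all_algebra.
From mathcomp Require Import complex mxtens.
From mathcomp Require Import reals.
From mathcomp Require Import ring.
Set Implicit Arguments. Unset Strict Implicit. Unset Printing Implicit Defensive.
Import Order.TTheory GRing.Theory Num.Theory.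
Local Open Scope ring_scope.

Lemma in_set3 (T : finType) (x a b c : T) :
  (x \in [set a; b; c]) = [|| x == a, x == b | x == c].
Proof. by rewrite !inE orbA. Qed.

Definition iX : 'I_4 := @Ordinal 4 1 isT.
Definition iY : 'I_4 := @Ordinal 4 2 isT.
Definition iZ : 'I_4 := @Ordinal 4 3 isT.

Definition pauli_prod (j k : 'I_4) : 'I_4 :=
  match val j, val k with
  | 0, _ => k | _, 0 => j
  | 1, 1 | 2, 2 | 3, 3 => 0
  | 1, 2 | 2, 1 => iZ
  | 1, 3 | 3, 1 => iY
  | _, _ => iX
  end.

Definition pauli_phase (j k : 'I_4) : nat :=
  match val j, val k with
  | 1, 2 | 2, 3 | 3, 1 => 1
  | 2, 1 | 3, 2 | 1, 3 => 3
  | _, _ => 0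
  end.

Definition anticomm (j k : 'I_4) : bool := [&& j != 0, k != 0 & j != k].

Lemma pauli_prodC j k : pauli_prod j k = pauli_prod k j.
Proof. by case: j => [[|[|[|[|//]]]] ?]; case: k => [[|[|[|[|//]]]] ?]; apply: val_inj. Qed.

Lemma pauli_phaseC j k : pauli_phase j k = ((pauli_phase k j + 2 * anticomm j k) %% 4)%N.
Proof. by case: j => [[|[|[|[|//]]]] ?]; case: k => [[|[|[|[|//]]]] ?]. Qed.

Definition ptmul (a b : pt) : pt := (pauli_prod a.1 b.1, pauli_prod a.2 b.2).
Definition ptphase (a b : pt) : nat := pauli_phase a.1 b.1 + pauli_phase a.2 b.2.
Definition symp (a b : pt) : bool := anticomm a.1 b.1 (+) anticomm a.2 b.2.
Definition inQ0 (p : pt) : bool := (p.1 != 0) && (p.2 != 0).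

Lemma symp_refl a : symp a a = false.
Proof. by rewrite /symp /anticomm !eqxx !andbF. Qed.

Lemma anticommC j k : anticomm j k = anticomm k j.
Proof. by rewrite /anticomm andbCA (eq_sym j k). Qed.

Lemma sympC a b : symp a b = symp b a.
Proof. by rewrite /symp anticommC [anticomm a.2 _]anticommC. Qed.

Lemma Q0E p : (p \in Q0) = inQ0 p.
Proof. by rewrite inE. Qed.

Lemma Q0_point p : p \in Q0 -> is_point p.
Proof. by rewrite Q0E => /andP[p1 _]; apply: contra p1 => /eqP->. Qed.

(* Finite facts about the points are checked by [vm_compute] on this explicit
   enumeration: [Q0] and [#|_|] are locked and do not compute, hence the
   boolean [inQ0]. *)
Definition paulis : seq 'I_4 := [:: 0; iX; iY; iZ].
Definition pts : seq pt := [seq (j, k) | j <- paulis, k <- paulis].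

Lemma mem_pts a : a \in pts.
Proof.
have mem_paulis j : j \in paulis by case: j => [[|[|[|[|//]]]] ?].
by case: a => j k; apply/allpairsP; exists (j, k); rewrite !mem_paulis.
Qed.

Lemma forall_pt (P : pred pt) : all P pts -> forall a, P a.
Proof. by move/allP => h a; apply: h; apply: mem_pts. Qed.

Lemma forall_pt2 (P : pt -> pt -> bool) :
  all (fun a => all (P a) pts) pts -> forall a b, P a b.
Proof. by move=> h a; apply: forall_pt; apply: (forall_pt h). Qed.

Lemma card_pts (P : pred pt) : #|[set q | P q]| = count P pts.
Proof.
have uP : uniq [seq q <- pts | P q] by apply: filter_uniq; vm_compute.
rewrite -size_filter -(card_uniqP uP); apply: eq_card => q.
by rewrite inE mem_filter mem_pts andbT.
Qed.

Lemma card_Q0 : #|Q0| = 9.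
Proof.
have -> : Q0 = [set q | inQ0 q] by apply/setP => q; rewrite !inE.
by rewrite card_pts; vm_compute.
Qed.

Lemma card_offQ0 : #|[set q | is_point q && ~~ inQ0 q]| = 6.
Proof. by rewrite card_pts; vm_compute. Qed.

Lemma ptphase_even : forall a b, ~~ symp a b ==> ~~ odd (ptphase a b).
Proof. by apply: forall_pt2; vm_compute. Qed.

Lemma ptmul_point : forall a b, (a != b) ==> is_point (ptmul a b).
Proof. by apply: forall_pt2; vm_compute. Qed.

Lemma Q0_mul_closed : forall a b, [&& inQ0 a, inQ0 b, ~~ symp a b & a != b] ==>
  [&& inQ0 (ptmul a b), ptmul a b != a, ptmul a b != b,
      ~~ symp a (ptmul a b) & ~~ symp b (ptmul a b)].
Proof. by apply: forall_pt2; vm_compute. Qed.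

Lemma Q0_partner : forall p, inQ0 p ==>
  has (fun b => [&& inQ0 b, ~~ symp p b & anticomm p.2 b.2]) pts.
Proof. by apply: forall_pt; vm_compute. Qed.

Lemma count_perpQ0 : forall p, is_point p ==>
  (count (fun q => [&& is_point q, ~~ symp p q & inQ0 q]) pts == if inQ0 p then 5 else 3)%N.
Proof. by apply: forall_pt; vm_compute. Qed.

Lemma perpQ0_anticomm : forall p x, [&& is_point p, ~~ inQ0 p, inQ0 x & ~~ symp p x] ==>
  all (fun y => [&& inQ0 y, ~~ symp p y & x != y] ==> symp x y) pts.
Proof. by apply: forall_pt2; vm_compute. Qed.

Lemma ptrans_signs_out : forall p, is_point p && ~~ inQ0 p ==>
  has (fun u => has (fun t => all (fun q => ~~ symp p q ==>
    ((q.2 == iY) == (t && ((q.1 == iY) (+) (q.2 == iY))) (+) symp u q)) pts)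
    [:: false; true]) pts.
Proof. by apply: forall_pt; vm_compute. Qed.

Section PauliAlgebra.
Variable R : realType.
Local Notation C := R[i].
Local Open Scope complex_scope.
Local Open Scope sesquilinear_scope.

Local Notation pauli := (pauli R).
Local Notation opm := (opm R).

Lemma expr_i_mod4 n : 'i ^+ (n %% 4) = 'i ^+ n :> C.
Proof. by apply: expr_mod; rewrite (exprM _ 2 2) sqr_i expr2 mulrNN mulr1. Qed.

Lemma pauli_mul j k :
  pauli j *m pauli k = 'i ^+ pauli_phase j k *: pauli (pauli_prod j k).
Proof.
have ii : 'i * 'i = -1 :> C by rewrite -expr2 sqr_i.
have i3 : 'i ^+ 3 = - 'i :> C by rewrite exprS sqr_i mulrN1.
case: j => [[|[|[|[|//]]]] ?]; case: k => [[|[|[|[|//]]]] ?];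
rewrite /pauli /= ?mul1mx ?mulmx1 ?expr0 ?scale1r //;
apply/matrixP => a b; rewrite !mxE !big_ord_recr !big_ord0 /= !mxE;
case: a => [[|[|//]] ?]; case: b => [[|[|//]] ?];
by rewrite /= ?i3 ?expr1 ?mulr0 ?mul0r ?mulr1 ?mul1r ?addr0 ?add0r ?ii ?mulrN ?mulNr
  ?mulN1r ?opprK ?mul1r ?ii ?opprK ?mulr1 ?complexiE.
Qed.

Lemma pauli_sq j : pauli j *m pauli j = 1.
Proof.
by rewrite pauli_mul; case: j => [[|[|[|[|//]]]] ?]; rewrite expr0 scale1r.
Qed.

Lemma pauli_mulC j k :
  pauli j *m pauli k = (-1) ^+ anticomm j k *: (pauli k *m pauli j).
Proof.
rewrite !pauli_mul scalerA pauli_prodC [pauli_phase j k]pauli_phaseC expr_i_mod4.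
by rewrite exprD exprM sqr_i mulrC.
Qed.

Lemma trmx_pauli j : (pauli j)^T = (-1) ^+ (j == iY) *: pauli j.
Proof.
case: j => [[|[|[|[|//]]]] ?]; rewrite /pauli /= ?trmx1 ?expr0 ?scale1r ?expr1 //;
apply/matrixP => a b; rewrite !mxE;
case: a => [[|[|//]] ?]; case: b => [[|[|//]] ?]; rewrite /= ?mulN1r ?opprK ?oppr0 //.
Qed.

Lemma pauli_herm j : (pauli j)^t* = pauli j.
Proof.
have conjNi : Num.conj (- 'i%R : C) = 'i%R.
  by rewrite -[RHS]opprK rmorphN; congr (- _); exact: conjCi.
case: j => [[|[|[|[|//]]]] ?]; rewrite /pauli /=;
apply/matrixP => a b; rewrite !mxE;
case: a => [[|[|//]] ?]; case: b => [[|[|//]] ?];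
by rewrite /= ?conjNi ?conjCi ?rmorphN ?rmorph0 ?rmorph1 ?opprK.
Qed.

Lemma mxtrace_pauli j : j != 0 -> \tr (pauli j) = 0.
Proof.
case: j => [[|[|[|[|//]]]] ?] // _;
by rewrite /mxtrace /pauli /= !big_ord_recr big_ord0 /= !mxE /= ?add0r ?addr0 ?subrr.
Qed.

Lemma tensmxZl m n p q a (A : 'M[C]_(m, n)) (B : 'M[C]_(p, q)) :
  (a *: A) *t B = a *: (A *t B).
Proof. by apply/matrixP => i j; rewrite !mxE mulrA. Qed.

Lemma tensmxZr m n p q a (A : 'M[C]_(m, n)) (B : 'M[C]_(p, q)) :
  A *t (a *: B) = a *: (A *t B).
Proof. by apply/matrixP => i j; rewrite !mxE mulrCA. Qed.

Lemma tensmx11 m n : (1%:M : 'M[C]_m) *t (1%:M : 'M[C]_n) = 1%:M.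
Proof.
apply/matrixP => i j; case: (mxtens_indexP i) => i1 i2; case: (mxtens_indexP j) => j1 j2.
rewrite tensmxE !mxE (inj_eq (can_inj (@mxtens_indexK _ _))) xpair_eqE.
by case: (i1 == j1); case: (i2 == j2); rewrite ?mulr1 ?mulr0.
Qed.

Lemma mxtrace_tens m n (A : 'M[C]_m) (B : 'M[C]_n) : \tr (A *t B) = \tr A * \tr B.
Proof. by rewrite /mxtrace mulr_sum; apply: eq_bigr => i _; rewrite mxE. Qed.

Lemma opm_mul a b : opm a *m opm b = 'i ^+ ptphase a b *: opm (ptmul a b).
Proof. by rewrite /opm tensmx_mul !pauli_mul tensmxZl tensmxZr scalerA -exprD. Qed.

Lemma opm_mulC a b : opm a *m opm b = (-1) ^+ symp a b *: (opm b *m opm a).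
Proof.
rewrite /opm !tensmx_mul pauli_mulC [pauli a.2 *m _]pauli_mulC.
by rewrite tensmxZl tensmxZr scalerA signr_addb.
Qed.

Lemma opm00 : opm (0, 0) = 1.
Proof. exact: tensmx11. Qed.

Lemma opm_sq a : opm a *m opm a = 1.
Proof. by rewrite /opm tensmx_mul !pauli_sq tensmx11. Qed.

Lemma commutesE a b : commutes R a b = ~~ symp a b.
Proof.
have inv : (opm b *m opm a) *m (opm a *m opm b) = 1.
  by rewrite mulmxA -(mulmxA (opm b)) opm_sq mulmx1 opm_sq.
rewrite /commutes opm_mulC; case: (symp a b); rewrite ?scale1r ?eqxx //=.
apply/negP; rewrite scaleN1r eq_sym -subr_eq0 opprK -mulr2n -scaler_nat scaler_eq0.
rewrite pnatr_eq0 /= => /eqP ba0; move: inv; rewrite ba0 mul0mx.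
by move/matrixP/(_ 0 0); rewrite !mxE /= => /eqP; rewrite eq_sym oner_eq0.
Qed.

Lemma perpE p q : (q \in perp R p) = is_point q && ~~ symp p q.
Proof. by rewrite inE commutesE. Qed.

Lemma opm_mul_comm a b : ~~ symp a b ->
  opm a *m opm b = (-1) ^+ (ptphase a b)./2 *: opm (ptmul a b).
Proof.
move=> ab; have /implyP/(_ ab)/negPf even_ab := ptphase_even a b.
by rewrite opm_mul -{1}[ptphase a b]odd_double_half even_ab add0n -mul2n exprM sqr_i.
Qed.

Lemma trmx_opm q : (opm q)^T = (-1) ^+ ((q.1 == iY) (+) (q.2 == iY)) *: opm q.
Proof. by rewrite /opm trmx_tens !trmx_pauli tensmxZl tensmxZr scalerA signr_addb. Qed.

Lemma opm_herm q : (opm q)^t* = opm q.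
Proof. by rewrite /opm trmx_tens map_mxT !pauli_herm. Qed.

Lemma mxtrace_opm q : is_point q -> \tr (opm q) = 0.
Proof.
case: q => j k; rewrite /is_point /opm mxtrace_tens /=.
have [->|j0] := eqVneq j 0; last by rewrite mxtrace_pauli // mul0r.
by rewrite xpair_eqE eqxx /= => k0; rewrite [\tr (pauli k)]mxtrace_pauli // mulr0.
Qed.

Lemma ptrans_tens (A B : 'M[C]_2) : ptrans (A *t B) = A *t B^T.
Proof.
apply/matrixP => i j; case: (mxtens_indexP i) => i1 i2; case: (mxtens_indexP j) => j1 j2.
by rewrite mxE !mxtens_indexK /= !mxE !mxtens_indexK.
Qed.

Fact ptrans_is_linear : linear (@ptrans R).
Proof. by move=> a A B; apply/matrixP => i j; rewrite !mxE. Qed.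

HB.instance Definition _ := GRing.isLinear.Build C _ _ _ (@ptrans R) ptrans_is_linear.

Lemma ptrans_opm q : ptrans (opm q) = (-1) ^+ (q.2 == iY) *: opm q.
Proof. by rewrite /opm ptrans_tens trmx_pauli tensmxZr. Qed.

Lemma ptrans1 : ptrans (1 : 'M[C]_(2 * 2)) = 1.
Proof. by rewrite -opm00 ptrans_opm scale1r. Qed.

Lemma mxtrace_ptrans (M : 'M[C]_(2 * 2)) : \tr (ptrans M) = \tr M.
Proof. by apply: eq_bigr => i _; rewrite mxE -surjective_pairing mxtens_unindexK. Qed.

Lemma mxtrace_opm_mul a b : a != b -> \tr (opm a *m opm b) = 0.
Proof.
move=> ab; have /implyP/(_ ab) := ptmul_point a b.
by rewrite opm_mul linearZ /= => /mxtrace_opm ->; rewrite mulr0.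
Qed.

Lemma ptrans_opm_mul a b :
  ptrans (opm a *m opm b) = (-1) ^+ anticomm a.2 b.2 *: (ptrans (opm a) *m ptrans (opm b)).
Proof.
rewrite /opm tensmx_mul [pauli a.2 *m _]pauli_mulC tensmxZr linearZ /=.
by rewrite !ptrans_tens tensmx_mul trmx_mul.
Qed.

End PauliAlgebra.

Section States.
Variable R : realType.
Local Notation C := R[i].
Local Open Scope sesquilinear_scope.

Lemma psdE (M : 'M[C]_(2 * 2)) :
  psd M <-> forall v : 'cV_(2 * 2), 0 <= (v ^t* *m M *m v) 0 0.
Proof. by split=> psdM v; move: (psdM v); rewrite map_trmx. Qed.

Lemma trmxC_mul m n p (A : 'M[C]_(m, n)) (B : 'M[C]_(n, p)) :
  (A *m B)^t* = B^t* *m A^t*.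
Proof. by rewrite trmx_mul map_mxM. Qed.

Lemma trmxC_1D n (A : 'M[C]_n) : A^t* = A -> (1 + A)^t* = 1 + A.
Proof. by move=> hA; rewrite linearD /= map_mxD hA trmx1 map_mx1. Qed.

Lemma cnorm_ge0 n (v : 'cV[C]_n) : 0 <= (v ^t* *m v) 0 0.
Proof. by rewrite mxE; apply: sumr_ge0 => i _; rewrite !mxE mulrC mul_conjC_ge0. Qed.

Lemma cnorm_eq0 n (v : 'cV[C]_n) : (v ^t* *m v) 0 0 = 0 -> v = 0.
Proof.
rewrite mxE => v0; apply/matrixP => i j; rewrite [j]ord1 mxE.
have ge0 k : true -> 0 <= (v ^t*) 0 k * v k 0 by rewrite !mxE mulrC mul_conjC_ge0.
have := psumr_eq0P ge0 v0 (i := i) isT.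
by rewrite !mxE mulrC => /eqP; rewrite mul_conjC_eq0 => /eqP.
Qed.

Lemma psd_scale_gram (a : C) (X : 'M[C]_(2 * 2)) : 0 <= a -> psd (a *: (X^t* *m X)).
Proof.
move=> a0; apply/psdE => v; rewrite -scalemxAr -scalemxAl mxE.
by rewrite mulmxA -trmxC_mul -mulmxA mulr_ge0 ?cnorm_ge0.
Qed.

Lemma psd_trmx (M : 'M[C]_(2 * 2)) : psd M -> psd M^T.
Proof.
move=> /psdE psdM; apply/psdE => v; have := psdM (map_mx Num.conj v).
rewrite (_ : (map_mx Num.conj v)^t* = v^T); last by rewrite -map_trmx map_mxCK.
suff -> : (v ^t* *m M^T *m v) 0 0 = (v^T *m M *m map_mx Num.conj v) 0 0 by [].
have tr11 (X : 'M[C]_1) : X 0 0 = X^T 0 0 by rewrite mxE.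
by rewrite tr11 !trmx_mul trmxK map_trmx trmxK mulmxA.
Qed.

Lemma psd_herm_conj (U M : 'M[C]_(2 * 2)) : U^t* = U -> psd M -> psd (U *m M *m U).
Proof.
move=> hU /psdE psdM; apply/psdE => v.
by rewrite -{1}hU !mulmxA -trmxC_mul -!mulmxA mulmxA.
Qed.

Lemma psd_commuting_involutions (A B : 'M[C]_(2 * 2)) :
  A^t* = A -> B^t* = B -> A *m A = 1 -> B *m B = 1 -> A *m B = B *m A ->
  psd (4^-1 *: ((1 + A) *m (1 + B))).
Proof.
move=> hA hB sA sB cAB; set X := (1 + A) *m (1 + B).
have cX : (1 + B) *m (1 + A) = X.
  by rewrite /X !mulmxDr !mulmxDl !mul1mx !mulmx1 cAB addrACA.
have hX : X^t* = X by rewrite trmxC_mul !trmxC_1D.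
have sq2 Y : Y *m Y = 1 -> (1 + Y) *m (1 + Y) = 2%:R *: (1 + Y).
  move=> sY; rewrite mulmxDr mulmx1 mulmxDl mul1mx sY scaler_nat mulr2n.
  by rewrite [Y + 1]addrC addrACA.
have XX : X^t* *m X = 4%:R *: X.
  rewrite hX /X -mulmxA (mulmxA (1 + B)) cX -(mulmxA (1 + A)) sq2 // mulmxA sq2 //.
  by rewrite -scalemxAl -scalemxAr scalerA -natrM.
have -> : 4^-1 *: X = (4 * 4)^-1 *: (X^t* *m X).
  by rewrite XX scalerA invfM -mulrA mulVf ?mulr1 // pnatr_eq0.
by apply: psd_scale_gram; rewrite invr_ge0 mulr_ge0 ?ler0n.
Qed.

Lemma psd_eigen_neg (M Q : 'M[C]_(2 * 2)) (a : C) :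
  psd M -> 0 < a -> M *m Q = - a *: Q -> Q = 0.
Proof.
move=> /psdE psdM a0 MQ; apply/matrixP => i j.
have -> : Q i j = col j Q i 0 by rewrite mxE.
suff -> : col j Q = 0 by rewrite !mxE.
rewrite colE; apply: cnorm_eq0; apply/eqP; rewrite eq_le cnorm_ge0 andbT.
have := psdM (Q *m delta_mx j 0).
rewrite trmxC_mul -!mulmxA (mulmxA M) MQ -scalemxAl -!scalemxAr mxE !mulmxA.
by rewrite mulNr oppr_ge0 pmulr_rle0.
Qed.

Lemma not_psd_commuting_involutions (A B : 'M[C]_(2 * 2)) :
  A *m A = 1 -> B *m B = 1 -> A *m B = B *m A ->
  \tr A = 0 -> \tr B = 0 -> \tr (A *m B) = 0 ->
  ~ psd (4^-1 *: (1 + A + B - A *m B)).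
Proof.
move=> sA sB cAB tA tB tAB psdM.
pose Q := (1 - A) *m (1 - B).
have AQ : A *m Q = - Q by rewrite /Q mulmxA (mulmxBr A) mulmx1 sA -mulNmx opprB.
have BQ : B *m Q = - Q.
  have cBA : B *m (1 - A) = (1 - A) *m B by rewrite mulmxBr mulmxBl mulmx1 mul1mx cAB.
  by rewrite /Q mulmxA cBA -mulmxA (mulmxBr B) mulmx1 sB -mulmxN opprB.
have MQ : 4^-1 *: (1 + A + B - A *m B) *m Q = - 2^-1 *: Q.
  rewrite -scalemxAl mulmxBl !mulmxDl mul1mx -mulmxA BQ mulmxN AQ opprK.
  rewrite subrr add0r -opprD -mulr2n.
  have -> : Q *- 2 = (- 2%:R : C) *: Q by rewrite scaleNr scaler_nat.
  by rewrite scalerA; congr (_ *: _); field.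
have := psd_eigen_neg psdM _ MQ; rewrite invr_gt0 ltr0n => /(_ isT) Q0.
have : \tr Q = 0 by rewrite Q0 linear0.
rewrite /Q mulmxBl mul1mx !mulmxBr mulmx1 !linearB /= mxtrace1 tA tB tAB.
by rewrite !oppr0 !addr0 => /eqP; rewrite pnatr_eq0.
Qed.

End States.

Lemma big_three (T : finType) (V : nmodType) (A : {set T}) (F : T -> V) a b e :
  a \in A -> b \in A -> e \in A -> a != b -> a != e -> b != e ->
  (forall q, q != a -> q != b -> q != e -> F q = 0) ->
  \sum_(q in A) F q = F a + F b + F e.
Proof.
move=> aA bA eA ab ae be F0.
rewrite (bigD1 a) //= (bigD1 b) /=; last by rewrite bA eq_sym ab.
rewrite (bigD1 e) /=; last by rewrite eA eq_sym ae eq_sym be.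
by rewrite big1 ?addr0 ?addrA // => q /andP[/andP[/andP[_ qa] qb] qe]; apply: F0.
Qed.

Section XStates.
Variable R : realType.
Local Notation C := R[i].
Local Notation opm := (opm R).
Local Notation xstate := (@xstate R).

Lemma eq_xstate p (c c' : pt -> R) :
  {in perp R p, c =1 c'} -> xstate p c = xstate p c'.
Proof. by move=> cc'; rewrite /xstate; congr (_ *: (_ + _)); apply: eq_bigr => q /cc' ->. Qed.

Lemma xstate_twist (f : {linear 'M[C]_(2 * 2) -> 'M[C]_(2 * 2)}) (s : pt -> bool) p c :
  f 1 = 1 -> (forall q, f (opm q) = (-1) ^+ s q *: opm q) ->
  f (xstate p c) = xstate p (fun q => (-1) ^+ s q * c q).
Proof.
move=> f1 fq; rewrite /xstate linearZ linearD linear_sum f1; congr (_ *: (_ + _)).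
by apply: eq_bigr => q _; rewrite linearZZ fq scalerA rmorphM rmorph_sign mulrC.
Qed.

Lemma ptrans_xstate p c :
  ptrans (xstate p c) = xstate p (fun q => (-1) ^+ (q.2 == iY) * c q).
Proof.
by apply: xstate_twist => [|q] /=; rewrite ?ptrans1 ?ptrans_opm.
Qed.

Lemma trmx_xstate p c :
  (xstate p c)^T = xstate p (fun q => (-1) ^+ ((q.1 == iY) (+) (q.2 == iY)) * c q).
Proof. by apply: (xstate_twist (f := @trmx C _ _)) => [|q] /=; rewrite ?trmx1 ?trmx_opm. Qed.

Lemma conj_xstate u p c :
  opm u *m xstate p c *m opm u = xstate p (fun q => (-1) ^+ symp u q * c q).
Proof.
apply: (xstate_twist (f := mulmxr (opm u) \o mulmx (opm u))) => [|q] /=.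
  by rewrite mulmx1 opm_sq.
by rewrite opm_mulC -scalemxAl -mulmxA opm_sq mulmx1.
Qed.

End XStates.

Section Groups.
Variable R : realType.
Local Notation opm := (opm R).
Local Notation xstate := (@xstate R).

Lemma ptrans_xstate_out p : is_point p -> p \notin Q0 -> exists u t, forall c,
  ptrans (xstate p c) = opm u *m (if t then (xstate p c)^T else xstate p c) *m opm u.
Proof.
move=> pp pQ; have /implyP := ptrans_signs_out p; rewrite pp -Q0E pQ.
move=> /(_ isT) /hasP[u _ /hasP[t _ /allP signs]]; exists u, t => c.
rewrite ptrans_xstate; case: t signs => signs; rewrite ?trmx_xstate conj_xstate;
apply: eq_xstate => q; rewrite perpE => /andP[_ pq];
have /implyP/(_ pq)/eqP sq := signs q (mem_pts q);
by rewrite ?mulrA -?signr_addb {1}sq /= 1?addbC.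
Qed.

Lemma group1_out p : is_point p -> p \notin Q0 -> group1 R p.
Proof.
move=> pp pQ c valid_c; rewrite /separable; have [u [t ->]] := ptrans_xstate_out pp pQ.
apply: psd_herm_conj; first exact: opm_herm.
by case: t; [apply: psd_trmx|]; exact: valid_c.
Qed.

Definition pair_coef (p b : pt) (q : pt) : R :=
  if q == p then 1 else if q == b then 1
  else if q == ptmul p b then (-1) ^+ (ptphase p b)./2 else 0.

Lemma xstate_pair p b : p \in Q0 -> b \in Q0 -> ~~ symp p b -> p != b ->
  xstate p (pair_coef p b) = 4^-1 *: ((1 + opm p) *m (1 + opm b)).
Proof.
move=> pQ bQ pb pnb; have /implyP := Q0_mul_closed p b.
rewrite -!Q0E pQ bQ pb pnb => /(_ isT) /and5P[pbQ pbp pbb p_pb _].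
rewrite eq_sym in pbp; rewrite eq_sym in pbb.
have perpQ0 q : q \in Q0 -> ~~ symp p q -> q \in perp R p.
  by rewrite perpE => /Q0_point -> ->.
have c_p : pair_coef p b p = 1 by rewrite /pair_coef eqxx.
have c_b : pair_coef p b b = 1 by rewrite /pair_coef eq_sym (negPf pnb) eqxx.
have c_pb : pair_coef p b (ptmul p b) = (-1) ^+ (ptphase p b)./2.
  by rewrite /pair_coef eq_sym (negPf pbp) eq_sym (negPf pbb) eqxx.
rewrite /xstate (big_three (a := p) (b := b) (e := ptmul p b)) ?perpQ0 ?symp_refl //;
  last by move=> q qp qb qpb; rewrite /pair_coef (negPf qp) (negPf qb) (negPf qpb) scale0r.
rewrite /= c_p c_b c_pb rmorph1 rmorph_sign !scale1r -opm_mul_comm //.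
by rewrite mulmxDr !mulmxDl !mul1mx mulmx1 !addrA.
Qed.

Lemma group2_in p : p \in Q0 -> group2 R p.
Proof.
move=> pQ; have /implyP := Q0_partner p; rewrite -Q0E pQ.
move=> /(_ isT) /hasP[b _]; rewrite -Q0E => /and3P[bQ pb anti2].
have pnb : p != b by apply: contraTneq anti2 => ->; rewrite /anticomm eqxx !andbF.
have cPB : opm p *m opm b = opm b *m opm p by apply/eqP; rewrite [_ == _]commutesE.
exists (pair_coef p b); rewrite /valid /entangled xstate_pair //; split.
  by apply: psd_commuting_involutions; rewrite ?opm_herm ?opm_sq.
rewrite linearZ /=.
have -> : ptrans ((1 + opm p) *m (1 + opm b)) =
    1 + ptrans (opm p) + ptrans (opm b) - ptrans (opm p) *m ptrans (opm b).
  rewrite mulmxDr !mulmxDl !mul1mx mulmx1 !linearD /= ptrans1.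
  by rewrite ptrans_opm_mul anti2 expr1 scaleN1r !addrA.
apply: not_psd_commuting_involutions.
- by rewrite ptrans_opm -scalemxAl -scalemxAr scalerA -signr_addb addbb opm_sq scale1r.
- by rewrite ptrans_opm -scalemxAl -scalemxAr scalerA -signr_addb addbb opm_sq scale1r.
- by rewrite !ptrans_opm -!scalemxAl -!scalemxAr cPB !scalerA mulrC.
- by rewrite mxtrace_ptrans mxtrace_opm // Q0_point.
- by rewrite mxtrace_ptrans mxtrace_opm // Q0_point.
- rewrite !ptrans_opm -scalemxAl -scalemxAr linearZ linearZ /= mxtrace_opm_mul //.
  by rewrite !mulr0.
Qed.

Lemma group2P p : is_point p -> group2 R p <-> p \in Q0.
Proof.
move=> pp; split=> [[c [valid_c ent]] | /group2_in //].
by apply/negPn/negP => pQ; apply: ent; apply: group1_out.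
Qed.

Lemma group1P p : is_point p -> group1 R p <-> p \notin Q0.
Proof.
move=> pp; split=> [g1 | /(group1_out pp) //].
by apply/negP => /group2_in [c [valid_c ent]]; apply: ent; apply: g1.
Qed.

End Groups.

Section Geometry.
Variable R : realType.

Lemma line_perp L x y : is_line R L -> x \in L -> y \in L -> y \in perp R x.
Proof.
case=> a [b [c [-> /and3P[pa pb pc] _ /and3P[ab bc ac] _]]].
rewrite !commutesE in ab bc ac; rewrite perpE !in_set3.
by case/or3P=> /eqP-> /or3P[] /eqP->; rewrite ?pa ?pb ?pc ?symp_refl // sympC.
Qed.

Lemma grid_line_mul a b : a \in Q0 -> b \in Q0 -> ~~ symp a b -> a != b ->
  grid_line R [set a; b; ptmul a b].
Proof.
move=> aQ bQ ab anb; have /implyP := Q0_mul_closed a b.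
rewrite -!Q0E aQ bQ ab anb => /(_ isT) /and5P[cQ ca cb ac bc].
split; last by apply/subsetP => x; rewrite in_set3 => /or3P[] /eqP->.
exists a, b, (ptmul a b); split=> //.
- by rewrite !Q0_point.
- by rewrite anb ![_ == ptmul _ _]eq_sym ca cb.
- by rewrite !commutesE ab ac bc.
- by exists ('i ^+ ptphase a b); apply: opm_mul.
Qed.

Lemma grid_collinearP x y : x \in Q0 -> x != y ->
  (exists L, [/\ grid_line R L, x \in L & y \in L]) <-> y \in perp R x :&: Q0.
Proof.
move=> xQ xy; split.
  by case=> L [[lineL LQ] xL yL]; rewrite inE (line_perp lineL) // (subsetP LQ).
rewrite inE perpE => /andP[/andP[_ xy'] yQ]; exists [set x; y; ptmul x y].
by split; [apply: grid_line_mul | rewrite in_set3 eqxx | rewrite in_set3 eqxx orbT].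
Qed.

Lemma perpQ0_grid x y : x \in Q0 ->
  y \in perp R x :&: Q0 <-> (y = x \/ exists L, [/\ grid_line R L, x \in L & y \in L]).
Proof.
move=> xQ; have [->|yx] := eqVneq y x.
  by split=> [|_]; [left | rewrite inE perpE Q0_point // symp_refl xQ].
have /(grid_collinearP xQ) col : x != y by rewrite eq_sym.
by split=> [/col|[/eqP|/col]]; [right | rewrite (negPf yx) |].
Qed.

Lemma card_perpQ0 p : is_point p -> #|perp R p :&: Q0| = if p \in Q0 then 5 else 3.
Proof.
move=> pp; have /implyP/(_ pp)/eqP := count_perpQ0 p.
rewrite Q0E -card_pts => <-; apply: eq_card => q.
by rewrite in_setI perpE Q0E inE andbA.
Qed.

Lemma tangential_atP p : is_point p -> tangential_at R p <-> p \in Q0.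
Proof.
move=> pp; split=> [[x [xQ Sx]] | pQ]; last by exists p; split=> // y; apply: perpQ0_grid.
have Spx : perp R p :&: Q0 = perp R x :&: Q0.
  by apply/setP => y; apply/idP/idP => [/Sx/(perpQ0_grid _ xQ) | /(perpQ0_grid _ xQ)/Sx].
have := card_perpQ0 pp; rewrite Spx card_perpQ0 ?Q0_point // xQ.
by case: (p \in Q0).
Qed.

Lemma transversal_atP p : is_point p -> transversal_at R p <-> p \notin Q0.
Proof.
move=> pp; split=> [[_ card3 _] | pQ].
  by move: card3; rewrite card_perpQ0 //; case: (p \in Q0).
split; [exact: subsetIr | by rewrite card_perpQ0 // (negPf pQ) |].
move=> x y /setIP[px xQ] /setIP[py yQ] xy /(grid_collinearP xQ xy).
rewrite in_setI perpE yQ andbT => /andP[_ /negPf xy_comm].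
move: px py; rewrite !perpE => /andP[_ px] /andP[_ py].
have /implyP := perpQ0_anticomm p x; rewrite -!Q0E pp pQ xQ px.
by move=> /(_ isT) /allP/(_ y (mem_pts y)); rewrite -Q0E yQ py xy xy_comm.
Qed.

End Geometry.

Theorem proposition3 (R : realType) :
  [/\ exists S : {set pt}, #|S| = 9 /\
        (forall p : pt, p \in S <-> (is_point p /\ group2 R p)),
      exists S : {set pt}, #|S| = 6 /\
        (forall p : pt, p \in S <-> (is_point p /\ group1 R p)),
      forall p : pt, is_point p -> (group2 R p <-> tangential_at R p) &
      forall p : pt, is_point p -> (group1 R p <-> transversal_at R p)].
Proof.
split.
- exists Q0; split=> [|p]; first exact: card_Q0.
  split=> [pQ | [pp /(group2P R pp) //]].
  by have pp := Q0_point pQ; split; last exact/(group2P R pp).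
- exists [set q | is_point q && ~~ inQ0 q]; split=> [|p]; first exact: card_offQ0.
  rewrite inE -Q0E; split=> [/andP[pp pQ] | [pp /(group1P R pp) pQ]]; last by rewrite pp.
  by split; last exact/(group1P R pp).
- by move=> p pp; apply: iff_trans (group2P R pp) (iff_sym (tangential_atP R pp)).
- by move=> p pp; apply: iff_trans (group1P R pp) (iff_sym (transversal_atP R pp)).
Qed.
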